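(* Let $a,\omega,\mu\in\mathbb{R}$ and, on the open set $\{y\neq0\}\subset T^*\mathbb{R}^2$ with coordinates ordered as $(p_x,p_y,x,y)$, consider \[H_{\mathrm{KK}}=\tfrac12(p_x^2+p_y^2)+8\omega x^2+\tfrac{\omega}{2}y^2+a\,xy^2+\tfrac{16a}{3}x^3+\tfrac{\mu}{2y^2},\] \[K_{\mathrm{KK}}=9\Bigl(\omega y^2+p_y^2+\tfrac{\mu}{y^2}\Bigr)^2+12a\,p_y y^2(3xp_y-yp_x)-2a^2y^4(6x^2+y^2)+12ax(\mu-\omega y^4)-18\omega\mu.\] Let $X$ be the vector field with components \[X^{p_x}=-4ax\,p_x-6ay\,p_y+\tfrac{48x(ax+\omega)}{y}p_y,\quad X^{p_y}=0,\quad X^x=-\tfrac12ay^2-\tfrac{3p_xp_y}{y}-3\omega x,\quad X^y=-\tfrac{6p_y^2}{y}+(8ax+3\omega)y,\] let $P_1=\mathcal L_XP_0$, i.e. (since $P_0$ is constant) $P_1=-(J_XP_0+P_0J_X^{\top})$ with $J_X$ the Jacobian matrix of $X$, and let $N=P_1P_0^{-1}$, $N^*=P_0^{-1}P_1$. Then: (i) $\{H_{\mathrm{KK}},K_{\mathrm{KK}}\}_0=0$; (ii) the Nijenhuis torsion of $N$ vanishes identically; (iii) with covectors written as column vectors of partial derivatives in the order $(p_x,p_y,x,y)$, \[N^*dH_{\mathrm{KK}}=M_{11}\,dH_{\mathrm{KK}}+M_{12}\,dK_{\mathrm{KK}},\qquad N^*dK_{\mathrm{KK}}=M_{21}\,dH_{\mathrm{KK}}+M_{22}\,dK_{\mathrm{KK}},\]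 where \[M_{11}=-2ax-\tfrac{3p_y^2}{y^2}+\tfrac{3\mu}{y^4},\quad M_{12}=-\tfrac{1}{12y^2},\quad M_{22}=-2ax-\tfrac{3p_y^2}{y^2}-\tfrac{3\mu}{y^4},\quad M_{21}=-\tfrac{12}{y^2}\bigl(K_{\mathrm{KK}}+6\mu M_{22}\bigr);\] (iv) the eigenvalues of the matrix $M=(M_{ab})$ are \[u_{1,2}=-2ax-\tfrac{3p_y^2}{y^2}\pm\tfrac{1}{y^2}\sqrt{K_{\mathrm{KK}}-12a\mu x-\tfrac{18\mu p_y^2}{y^2}-\tfrac{9\mu^2}{y^4}}.\]
   Context: $P_0$ is the canonical Poisson tensor on $T^*\mathbb{R}^2$, which in the ordering $(p_x,p_y,x,y)$ is the matrix $\begin{pmatrix}0&-I_2\\ I_2&0\end{pmatrix}$; the associated bracket is $\{f,g\}_0=f_xg_{p_x}-f_{p_x}g_x+f_yg_{p_y}-f_{p_y}g_y$. The Nijenhuis torsion of a $(1,1)$-tensor $N$ is $T_N(X,Y)=[NX,NY]-N([NX,Y]+[X,NY]-N[X,Y])$. *)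

From Stdlib Require Import Reals Lra Lia.
From Coquelicot Require Import Coquelicot.
Open Scope R_scope.

(* Points of T^*R^2 are functions nat -> R; only coordinates 0..3 matter,
   in the order (p_x, p_y, x, y) = (0, 1, 2, 3). *)
Definition pt := nat -> R.
Definition sum4 (f : nat -> R) : R := f 0%nat + f 1%nat + f 2%nat + f 3%nat.

Definition upd (p : pt) (j : nat) (t : R) : pt :=
  fun i => if Nat.eqb i j then t else p i.

Definition pd (f : pt -> R) (j : nat) (p : pt) : R :=
  Derive (fun t => f (upd p j t)) (p j).

Definition mat := nat -> nat -> R.
Definition mmul (A B : mat) : mat := fun i j => sum4 (fun k => A i k * B k j).
Definition mtr (A : mat) : mat := fun i j => A j i.
Definition mvec (A : mat) (v : nat -> R) : nat -> R := fun i => sum4 (fun j => A i j * v j).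
Definition idm : mat := fun i j => if Nat.eqb i j then 1 else 0.

Definition P0 : mat := fun i j =>
  match i, j with
  | 0%nat, 2%nat => -1 | 1%nat, 3%nat => -1 | 2%nat, 0%nat => 1 | 3%nat, 1%nat => 1 | _, _ => 0 end.
Definition P0inv : mat := fun i j =>
  match i, j with
  | 0%nat, 2%nat => 1 | 1%nat, 3%nat => 1 | 2%nat, 0%nat => -1 | 3%nat, 1%nat => -1 | _, _ => 0 end.

Lemma P0_P0inv : forall i j, (i < 4)%nat -> (j < 4)%nat ->
  mmul P0 P0inv i j = idm i j /\ mmul P0inv P0 i j = idm i j.
Proof.
  intros i j Hi Hj.
  unfold mmul, sum4, P0, P0inv, idm.
  do 4 (destruct i as [|i]; [ do 4 (destruct j as [|j]; [simpl; split; ring|]); exfalso; lia | ]).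
  exfalso; lia.
Qed.

Definition pb0 (f g : pt -> R) (p : pt) : R :=
  pd f 2 p * pd g 0 p - pd f 0 p * pd g 2 p + pd f 3 p * pd g 1 p - pd f 1 p * pd g 3 p.

Definition vf := pt -> nat -> R.

Definition jac (X : vf) (p : pt) : mat := fun i j => pd (fun q => X q i) j p.

Definition lie (X Y : vf) : vf := fun p i =>
  sum4 (fun j => X p j * pd (fun q => Y q i) j p - Y p j * pd (fun q => X q i) j p).

Definition tapp (N : pt -> mat) (X : vf) : vf := fun p => mvec (N p) (X p).
Definition vadd (X Y : vf) : vf := fun p i => X p i + Y p i.
Definition vsub (X Y : vf) : vf := fun p i => X p i - Y p i.

Definition torsion (N : pt -> mat) (X Y : vf) : vf :=
  vsub (lie (tapp N X) (tapp N Y))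
       (tapp N (vsub (vadd (lie (tapp N X) Y) (lie X (tapp N Y)))
                     (tapp N (lie X Y)))).

Definition lieP (X : vf) (p : pt) : mat := fun i j =>
  - (mmul (jac X p) P0 i j + mmul P0 (mtr (jac X p)) i j).

Section KK.
Variables a w mu : R.

Definition HKK (p : pt) : R :=
  let px := p 0%nat in let py := p 1%nat in let x := p 2%nat in let y := p 3%nat in
  / 2 * (px ^ 2 + py ^ 2) + 8 * w * x ^ 2 + w / 2 * y ^ 2 + a * x * y ^ 2
  + 16 * a / 3 * x ^ 3 + mu / (2 * y ^ 2).

Definition KKK (p : pt) : R :=
  let px := p 0%nat in let py := p 1%nat in let x := p 2%nat in let y := p 3%nat in
  9 * (w * y ^ 2 + py ^ 2 + mu / y ^ 2) ^ 2
  + 12 * a * py * y ^ 2 * (3 * x * py - y * px)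
  - 2 * a ^ 2 * y ^ 4 * (6 * x ^ 2 + y ^ 2)
  + 12 * a * x * (mu - w * y ^ 4) - 18 * w * mu.

Definition XKK : vf := fun p i =>
  let px := p 0%nat in let py := p 1%nat in let x := p 2%nat in let y := p 3%nat in
  match i with
  | 0%nat => - 4 * a * x * px - 6 * a * y * py + 48 * x * (a * x + w) / y * py
  | 1%nat => 0
  | 2%nat => - / 2 * a * y ^ 2 - 3 * px * py / y - 3 * w * x
  | 3%nat => - 6 * py ^ 2 / y + (8 * a * x + 3 * w) * y
  | _ => 0
  end.

Definition P1 (p : pt) : mat := lieP XKK p.
Definition NKK (p : pt) : mat := mmul (P1 p) P0inv.
Definition NstarKK (p : pt) : mat := mmul P0inv (P1 p).

Definition M11 (p : pt) : R :=
  - 2 * a * p 2%nat - 3 * p 1%nat ^ 2 / p 3%nat ^ 2 + 3 * mu / p 3%nat ^ 4.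
Definition M12 (p : pt) : R := - / (12 * p 3%nat ^ 2).
Definition M22 (p : pt) : R :=
  - 2 * a * p 2%nat - 3 * p 1%nat ^ 2 / p 3%nat ^ 2 - 3 * mu / p 3%nat ^ 4.
Definition M21 (p : pt) : R := - 12 / p 3%nat ^ 2 * (KKK p + 6 * mu * M22 p).

(* radicand and centre of the eigenvalues u_{1,2} *)
Definition ucen (p : pt) : R := - 2 * a * p 2%nat - 3 * p 1%nat ^ 2 / p 3%nat ^ 2.
Definition urad (p : pt) : R :=
  KKK p - 12 * a * mu * p 2%nat - 18 * mu * p 1%nat ^ 2 / p 3%nat ^ 2
  - 9 * mu ^ 2 / p 3%nat ^ 4.
End KK.

Definition is_eigenvalue2 (m11 m12 m21 m22 : R) (l : C) : Prop :=
  exists v1 v2 : C, (v1 <> 0%C \/ v2 <> 0%C) /\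
    (RtoC m11 * v1 + RtoC m12 * v2 = l * v1)%C /\
    (RtoC m21 * v1 + RtoC m22 * v2 = l * v2)%C.

Definition vf_diff (X : vf) : Prop :=
  forall (q : pt) (i j : nat), q 3%nat <> 0 -> (i < 4)%nat -> (j < 4)%nat ->
    ex_derive (fun t => X (upd q j t) i) (q j).

(* Every claim is an identity between rational functions of (p_x, p_y, x, y) on {y <> 0}
   once the first partial derivatives are written out.  For the torsion this rests on the
   coordinate formula T_N(X, Y)^i = X^j Y^k T^i_jk, in which the derivatives of X and Y
   cancel, so that T_N = 0 amounts to the vanishing of the 64 components T^i_jk, each a
   rational function of N and its first derivatives.  For the eigenvalues, trace M is twice
   the centre c of u_{1,2} and det (M - c) = - urad / y^4, so the characteristic polynomial
   of M factors as (l - c)^2 - urad / y^4. *)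
From Stdlib Require Import Reals Lra Lia FunctionalExtensionality.
From Coquelicot Require Import Coquelicot.
Open Scope R_scope.

Ltac nonzero := repeat split; repeat match goal with
  | |- _ * _ <> 0 => apply Rmult_integral_contrapositive_currified
  | |- _ ^ _ <> 0 => apply pow_nonzero
  end; auto; try lra.

Ltac case_lt4 i := destruct i as [|[|[|[|i]]]]; [| | | | exfalso; lia].

Lemma upd_id (p : pt) (j : nat) : upd p j (p j) = p.
Proof.
  apply functional_extensionality; intro i; unfold upd.
  destruct (Nat.eqb_spec i j); subst; reflexivity.
Qed.

Lemma upd_y_nonzero_near (p : pt) (j : nat) :
  p 3%nat <> 0 -> locally (p j) (fun t => upd p j t 3%nat <> 0).
Proof.
  intros Hp. assert (Hpos : 0 < Rabs (p 3%nat)) by (apply Rabs_pos_lt; exact Hp).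
  exists (mkposreal _ Hpos). intros t Ht. unfold upd.
  destruct (Nat.eqb_spec 3 j) as [<-|_]; [|exact Hp].
  intros ->. change (Rabs (0 - p 3%nat) < Rabs (p 3%nat)) in Ht.
  rewrite Rminus_0_l, Rabs_Ropp in Ht. lra.
Qed.

Lemma pd_tapp (N : pt -> mat) (X : vf) (p : pt) (i j : nat) (dN : nat -> R) :
  (forall k, (k < 4)%nat -> is_derive (fun t => N (upd p j t) i k) (p j) (dN k)) ->
  (forall k, (k < 4)%nat -> ex_derive (fun t => X (upd p j t) k) (p j)) ->
  pd (fun q => tapp N X q i) j p =
  sum4 (fun k => dN k * X p k + N p i k * pd (fun q => X q k) j p).
Proof.
  intros HN HX. unfold pd, tapp, mvec, sum4. apply is_derive_unique.
  assert (Hterm : forall k, (k < 4)%nat ->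
    is_derive (fun t => N (upd p j t) i k * X (upd p j t) k) (p j)
      (dN k * X p k + N p i k * Derive (fun t => X (upd p j t) k) (p j))).
  { intros k Hk.
    pose proof (Derive.is_derive_mult _ _ _ _ _ (HN k Hk) (Derive_correct _ _ (HX k Hk))) as H.
    cbv beta in H. rewrite upd_id in H. exact H. }
  repeat refine (is_derive_plus _ _ _ _ _ _ _); apply Hterm; lia.
Qed.

(* [dN i k l] stands for the derivative d_l N^i_k. *)
Definition nijenhuis_coef (N : mat) (dN : nat -> nat -> nat -> R) (i j k : nat) : R :=
  sum4 (fun l => N l j * dN i k l - N l k * dN i j l)
  - sum4 (fun m => N i m * (dN m k j - dN m j k)).

Lemma torsion_coord (N : pt -> mat) (X Y : vf) (p : pt) (dN : nat -> nat -> nat -> R) (i : nat) :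
  (i < 4)%nat ->
  (forall i k j, (i < 4)%nat -> (k < 4)%nat -> (j < 4)%nat ->
     is_derive (fun t => N (upd p j t) i k) (p j) (dN i k j)) ->
  (forall k j, (k < 4)%nat -> (j < 4)%nat -> ex_derive (fun t => X (upd p j t) k) (p j)) ->
  (forall k j, (k < 4)%nat -> (j < 4)%nat -> ex_derive (fun t => Y (upd p j t) k) (p j)) ->
  torsion N X Y p i =
  sum4 (fun j => sum4 (fun k => X p j * Y p k * nijenhuis_coef (N p) dN i j k)).
Proof.
  intros Hi HN HX HY.
  assert (HNX : forall i j, (i < 4)%nat -> (j < 4)%nat ->
     pd (fun q => tapp N X q i) j p =
     sum4 (fun k => dN i k j * X p k + N p i k * pd (fun q => X q k) j p)).
  { intros i' j' Hi' Hj'. apply pd_tapp; intros k Hk; [apply HN | apply HX]; lia. }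
  assert (HNY : forall i j, (i < 4)%nat -> (j < 4)%nat ->
     pd (fun q => tapp N Y q i) j p =
     sum4 (fun k => dN i k j * Y p k + N p i k * pd (fun q => Y q k) j p)).
  { intros i' j' Hi' Hj'. apply pd_tapp; intros k Hk; [apply HN | apply HY]; lia. }
  assert (Htapp : forall (V : vf) q k, tapp N V q k = sum4 (fun l => N q k l * V q l))
    by reflexivity.
  unfold torsion, vsub, vadd, lie.
  rewrite !Htapp. unfold sum4. rewrite !Htapp. unfold sum4.
  rewrite !HNX, !HNY by lia. unfold nijenhuis_coef, sum4.
  ring.
Qed.

Lemma Cmult_eq_0 (x y : C) : (x * y = 0)%C -> x = 0 \/ y = 0.
Proof.
  intros Hxy. destruct (Ceq_dec x 0) as [Hx|Hx]; [now left|].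
  destruct (Ceq_dec y 0) as [Hy|Hy]; [now right|].
  exfalso. exact (Cmult_neq_0 x y Hx Hy Hxy).
Qed.

Lemma eigenvalue_2x2_iff (m11 m12 m21 m22 c r l : C) :
  m12 <> 0 -> (m11 + m22 = c + c)%C -> ((m11 - c) * (m22 - c) - m12 * m21 = - (r * r))%C ->
  ((exists v1 v2 : C, (v1 <> 0 \/ v2 <> 0) /\
      (m11 * v1 + m12 * v2 = l * v1)%C /\ (m21 * v1 + m22 * v2 = l * v2)%C) <->
   (l = c + r \/ l = c - r)%C).
Proof.
  intros H12 Htr Hdet.
  assert (Hchar : ((m11 - l) * (m22 - l) - m12 * m21 = (l - (c + r)) * (l - (c - r)))%C).
  { transitivity ((l - c) * (l - c) - (m11 + m22 - (c + c)) * (l - c)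
                  + ((m11 - c) * (m22 - c) - m12 * m21))%C; [ring|].
    rewrite Htr, Hdet. ring. }
  split.
  - intros (v1 & v2 & Hv & E1 & E2).
    assert (Hchar0 : ((m11 - l) * (m22 - l) - m12 * m21 = 0)%C).
    { destruct Hv as [Hv|Hv].
      + destruct (Cmult_eq_0 ((m11 - l) * (m22 - l) - m12 * m21) v1); [|assumption|contradiction].
        transitivity ((m22 - l) * (m11 * v1 + m12 * v2 - l * v1)
                      - m12 * (m21 * v1 + m22 * v2 - l * v2))%C; [ring|].
        rewrite E1, E2. ring.
      + destruct (Cmult_eq_0 ((m11 - l) * (m22 - l) - m12 * m21) v2); [|assumption|contradiction].
        transitivity ((m11 - l) * (m21 * v1 + m22 * v2 - l * v2)
                      - m21 * (m11 * v1 + m12 * v2 - l * v1))%C; [ring|].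
        rewrite E1, E2. ring. }
    rewrite Hchar in Hchar0.
    destruct (Cmult_eq_0 _ _ Hchar0); [left|right]; apply Ceq_minus; assumption.
  - intros Hl. exists m12, (l - m11)%C. split; [now left|]. split; [ring|].
    apply Ceq_minus.
    transitivity (- ((m11 - l) * (m22 - l) - m12 * m21))%C; [ring|].
    rewrite Hchar. destruct Hl as [-> | ->]; ring.
Qed.

Section Recursion_operator.
Variables a w : R.

Definition jacXKK_expl (q : pt) (i j : nat) : R :=
  let px := q 0%nat in let py := q 1%nat in let x := q 2%nat in let y := q 3%nat in
  match i, j with
  | 0%nat, 0%nat => -4 * a * x
  | 0%nat, 1%nat => -6 * a * y + 48 * x * (a * x + w) / y
  | 0%nat, 2%nat => -4 * a * px + 48 * (2 * a * x + w) * py / y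
  | 0%nat, 3%nat => -6 * a * py - 48 * x * (a * x + w) * py / y ^ 2
  | 2%nat, 0%nat => -3 * py / y
  | 2%nat, 1%nat => -3 * px / y
  | 2%nat, 2%nat => -3 * w
  | 2%nat, 3%nat => - a * y + 3 * px * py / y ^ 2
  | 3%nat, 1%nat => -12 * py / y
  | 3%nat, 2%nat => 8 * a * y
  | 3%nat, 3%nat => 6 * py ^ 2 / y ^ 2 + 8 * a * x + 3 * w
  | _, _ => 0
  end.

Lemma jac_XKK_eq (q : pt) (i j : nat) : q 3%nat <> 0 -> (i < 4)%nat -> (j < 4)%nat ->
  jac (XKK a w) q i j = jacXKK_expl q i j.
Proof.
  intros Hq Hi Hj. unfold jac, pd, XKK, upd, jacXKK_expl.
  case_lt4 i; case_lt4 j; cbv beta iota; simpl Nat.eqb; cbv beta iota;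
    (apply is_derive_unique; auto_derive; [nonzero .. | field; nonzero]).
Qed.

(* N P0 = P1 is skew-symmetric, so N = P0 N^T P0^-1: up to sign N has only six independent
   entries, whence the six gradients dN00 ... dN21 below. *)
Definition NKK_expl (q : pt) : mat := fun i k =>
  let px := q 0%nat in let py := q 1%nat in let x := q 2%nat in let y := q 3%nat in
  match i, k with
  | 0%nat, 0%nat => 4 * a * x + 3 * w
  | 0%nat, 1%nat => -2 * a * y - 48 * x * (a * x + w) / y
  | 0%nat, 3%nat => 6 * a * py + 48 * x * (a * x + w) * py / y ^ 2
  | 1%nat, 0%nat => a * y - 3 * px * py / y ^ 2
  | 1%nat, 1%nat => -6 * py ^ 2 / y ^ 2 - 8 * a * x - 3 * w
  | 1%nat, 2%nat => -(6 * a * py + 48 * x * (a * x + w) * py / y ^ 2)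
  | 2%nat, 1%nat => 3 * px / y
  | 2%nat, 2%nat => 4 * a * x + 3 * w
  | 2%nat, 3%nat => a * y - 3 * px * py / y ^ 2
  | 3%nat, 0%nat => -3 * px / y
  | 3%nat, 2%nat => -2 * a * y - 48 * x * (a * x + w) / y
  | 3%nat, 3%nat => -6 * py ^ 2 / y ^ 2 - 8 * a * x - 3 * w
  | _, _ => 0
  end.

Definition dN00 (q : pt) (j : nat) : R :=
  match j with 2%nat => 4 * a | _ => 0 end.
Definition dN01 (q : pt) (j : nat) : R :=
  let x := q 2%nat in let y := q 3%nat in
  match j with
  | 2%nat => -(96 * a * x + 48 * w) / y
  | 3%nat => -2 * a + 48 * x * (a * x + w) / y ^ 2
  | _ => 0 end.
Definition dN03 (q : pt) (j : nat) : R :=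
  let py := q 1%nat in let x := q 2%nat in let y := q 3%nat in
  match j with
  | 1%nat => 6 * a + 48 * x * (a * x + w) / y ^ 2
  | 2%nat => (96 * a * x + 48 * w) * py / y ^ 2
  | 3%nat => -96 * x * (a * x + w) * py / y ^ 3
  | _ => 0 end.
Definition dN10 (q : pt) (j : nat) : R :=
  let px := q 0%nat in let py := q 1%nat in let y := q 3%nat in
  match j with
  | 0%nat => -3 * py / y ^ 2
  | 1%nat => -3 * px / y ^ 2
  | 3%nat => a + 6 * px * py / y ^ 3
  | _ => 0 end.
Definition dN11 (q : pt) (j : nat) : R :=
  let py := q 1%nat in let y := q 3%nat in
  match j with
  | 1%nat => -12 * py / y ^ 2
  | 2%nat => -8 * a
  | 3%nat => 12 * py ^ 2 / y ^ 3
  | _ => 0 end.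
Definition dN21 (q : pt) (j : nat) : R :=
  let px := q 0%nat in let y := q 3%nat in
  match j with 0%nat => 3 / y | 3%nat => -3 * px / y ^ 2 | _ => 0 end.

Definition dNKK_expl (q : pt) (i k j : nat) : R :=
  match i, k with
  | 0%nat, 0%nat => dN00 q j
  | 0%nat, 1%nat => dN01 q j
  | 0%nat, 3%nat => dN03 q j
  | 1%nat, 0%nat => dN10 q j
  | 1%nat, 1%nat => dN11 q j
  | 1%nat, 2%nat => - dN03 q j
  | 2%nat, 1%nat => dN21 q j
  | 2%nat, 2%nat => dN00 q j
  | 2%nat, 3%nat => dN10 q j
  | 3%nat, 0%nat => - dN21 q j
  | 3%nat, 2%nat => dN01 q j
  | 3%nat, 3%nat => dN11 q j
  | _, _ => 0
  end.

Lemma NKK_eq (q : pt) (i k : nat) : q 3%nat <> 0 -> (i < 4)%nat -> (k < 4)%nat ->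
  NKK a w q i k = NKK_expl q i k.
Proof.
  intros Hq Hi Hk. unfold NKK, P1, lieP, mmul, mtr, sum4.
  rewrite !jac_XKK_eq by (auto; lia).
  unfold jacXKK_expl, NKK_expl, P0, P0inv.
  case_lt4 i; case_lt4 k; cbv beta iota; field; assumption.
Qed.

Lemma is_derive_NKK_expl (p : pt) (i k j : nat) :
  p 3%nat <> 0 -> (i < 4)%nat -> (k < 4)%nat -> (j < 4)%nat ->
  is_derive (fun t => NKK_expl (upd p j t) i k) (p j) (dNKK_expl p i k j).
Proof.
  intros Hp Hi Hk Hj. unfold NKK_expl, dNKK_expl, dN00, dN01, dN03, dN10, dN11, dN21, upd.
  case_lt4 i; case_lt4 k; case_lt4 j; cbv beta iota; simpl Nat.eqb; cbv beta iota;
    (auto_derive; [nonzero .. | field; nonzero]).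
Qed.

Lemma is_derive_NKK (p : pt) (i k j : nat) :
  p 3%nat <> 0 -> (i < 4)%nat -> (k < 4)%nat -> (j < 4)%nat ->
  is_derive (fun t => NKK a w (upd p j t) i k) (p j) (dNKK_expl p i k j).
Proof.
  intros Hp Hi Hk Hj.
  apply is_derive_ext_loc with (f := fun t => NKK_expl (upd p j t) i k).
  - apply (filter_imp _ _ (fun t Ht => eq_sym (NKK_eq _ i k Ht Hi Hk))).
    apply upd_y_nonzero_near, Hp.
  - apply is_derive_NKK_expl; assumption.
Qed.

Lemma nijenhuis_coef_NKK (p : pt) (i j k : nat) :
  p 3%nat <> 0 -> (i < 4)%nat -> (j < 4)%nat -> (k < 4)%nat ->
  nijenhuis_coef (NKK a w p) (dNKK_expl p) i j k = 0.
Proof.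
  intros Hp Hi Hj Hk. unfold nijenhuis_coef, sum4.
  rewrite !NKK_eq by (auto; lia).
  unfold NKK_expl, dNKK_expl, dN00, dN01, dN03, dN10, dN11, dN21.
  case_lt4 i; case_lt4 j; case_lt4 k; cbv beta iota; field; assumption.
Qed.

Lemma torsion_NKK (X Y : vf) (p : pt) (i : nat) :
  vf_diff X -> vf_diff Y -> p 3%nat <> 0 -> (i < 4)%nat ->
  torsion (NKK a w) X Y p i = 0.
Proof.
  intros HX HY Hp Hi.
  rewrite (torsion_coord (NKK a w) X Y p (dNKK_expl p) i Hi).
  - unfold sum4. rewrite !nijenhuis_coef_NKK by (auto; lia). ring.
  - intros; apply is_derive_NKK; assumption.
  - intros; apply HX; assumption.
  - intros; apply HY; assumption.
Qed.

End Recursion_operator.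

Section Hamiltonians.
Variables a w mu : R.

Definition dHKK_expl (q : pt) (j : nat) : R :=
  let px := q 0%nat in let py := q 1%nat in let x := q 2%nat in let y := q 3%nat in
  match j with
  | 0%nat => px
  | 1%nat => py
  | 2%nat => 16 * w * x + a * y ^ 2 + 16 * a * x ^ 2
  | _ => w * y + 2 * a * x * y - mu / y ^ 3
  end.

Definition dKKK_expl (q : pt) (j : nat) : R :=
  let px := q 0%nat in let py := q 1%nat in let x := q 2%nat in let y := q 3%nat in
  let S := w * y ^ 2 + py ^ 2 + mu / y ^ 2 in
  match j with
  | 0%nat => -12 * a * py * y ^ 3
  | 1%nat => 36 * S * py + 72 * a * x * py * y ^ 2 - 12 * a * px * y ^ 3
  | 2%nat => 36 * a * py ^ 2 * y ^ 2 - 24 * a ^ 2 * y ^ 4 * x + 12 * a * (mu - w * y ^ 4)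
  | _ => 36 * S * (w * y - mu / y ^ 3) + 24 * a * py * y * (3 * x * py - y * px)
         - 12 * a * py * px * y ^ 2 - 2 * a ^ 2 * (24 * y ^ 3 * x ^ 2 + 6 * y ^ 5)
         - 48 * a * x * w * y ^ 3
  end.

Lemma pd_HKK (q : pt) (j : nat) : q 3%nat <> 0 -> (j < 4)%nat ->
  pd (HKK a w mu) j q = dHKK_expl q j.
Proof.
  intros Hq Hj. unfold pd, HKK, upd, dHKK_expl.
  case_lt4 j; cbv beta iota; simpl Nat.eqb; cbv beta iota;
    (apply is_derive_unique; auto_derive; [nonzero .. | field; nonzero]).
Qed.

Lemma pd_KKK (q : pt) (j : nat) : q 3%nat <> 0 -> (j < 4)%nat ->
  pd (KKK a w mu) j q = dKKK_expl q j.
Proof.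
  intros Hq Hj. unfold pd, KKK, upd, dKKK_expl.
  case_lt4 j; cbv beta iota; simpl Nat.eqb; cbv beta iota;
    (apply is_derive_unique; auto_derive; [nonzero .. | field; nonzero]).
Qed.

Lemma pb0_HKK_KKK (p : pt) : p 3%nat <> 0 -> pb0 (HKK a w mu) (KKK a w mu) p = 0.
Proof.
  intros Hp. unfold pb0. rewrite !pd_HKK, !pd_KKK by (auto; lia).
  unfold dHKK_expl, dKKK_expl. field. nonzero.
Qed.

Lemma NstarKK_dHKK_dKKK (p : pt) (i : nat) : p 3%nat <> 0 -> (i < 4)%nat ->
  mvec (NstarKK a w p) (fun j => pd (HKK a w mu) j p) i
    = M11 a mu p * pd (HKK a w mu) i p + M12 p * pd (KKK a w mu) i p /\
  mvec (NstarKK a w p) (fun j => pd (KKK a w mu) j p) i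
    = M21 a w mu p * pd (HKK a w mu) i p + M22 a mu p * pd (KKK a w mu) i p.
Proof.
  intros Hp Hi. unfold mvec, NstarKK, P1, lieP, mmul, mtr, sum4.
  rewrite !jac_XKK_eq, !pd_HKK, !pd_KKK by (auto; lia).
  unfold M11, M12, M21, M22, KKK, jacXKK_expl, dHKK_expl, dKKK_expl, P0, P0inv.
  case_lt4 i; cbv beta iota; split; field; nonzero.
Qed.

Lemma eigenvalues_M (p : pt) (s l : C) : p 3%nat <> 0 -> (s * s = RtoC (urad a w mu p))%C ->
  is_eigenvalue2 (M11 a mu p) (M12 p) (M21 a w mu p) (M22 a mu p) l <->
  (l = RtoC (ucen a p) + s / RtoC (p 3%nat ^ 2) \/
   l = RtoC (ucen a p) - s / RtoC (p 3%nat ^ 2))%C.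
Proof.
  intros Hp Hs. set (y2 := p 3%nat ^ 2).
  assert (Hy2 : y2 <> 0) by (unfold y2; nonzero).
  assert (Hy2C : RtoC y2 <> 0) by (intros H; apply RtoC_inj in H; contradiction).
  assert (Hdet : (M11 a mu p - ucen a p) * (M22 a mu p - ucen a p) - M12 p * M21 a w mu p
                 = - urad a w mu p / (y2 * y2))
    by (unfold M11, M12, M21, M22, ucen, urad, y2; field; nonzero).
  apply eigenvalue_2x2_iff.
  - intros H. apply RtoC_inj in H. revert H. unfold M12.
    apply Ropp_neq_0_compat, Rinv_neq_0_compat. nonzero.
  - rewrite <- !RtoC_plus. f_equal. unfold M11, M22, ucen. field. nonzero.
  - replace (- (s / y2 * (s / y2)))%C with (RtoC (- urad a w mu p / (y2 * y2)))
      by (rewrite RtoC_div, RtoC_opp, RtoC_mult, <- Hs by nonzero; field; assumption).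
    rewrite <- Hdet, RtoC_minus, !RtoC_mult, !RtoC_minus. reflexivity.
Qed.

End Hamiltonians.

Theorem mainTheorem2 (a w mu : R) :
  (* (i) *)
  (forall p : pt, p 3%nat <> 0 -> pb0 (HKK a w mu) (KKK a w mu) p = 0) /\
  (* (ii) Nijenhuis torsion of N vanishes on {y <> 0} *)
  (forall X Y : vf, vf_diff X -> vf_diff Y ->
     forall (p : pt) (i : nat), p 3%nat <> 0 -> (i < 4)%nat ->
       torsion (NKK a w) X Y p i = 0) /\
  (* (iii) *)
  (forall (p : pt) (i : nat), p 3%nat <> 0 -> (i < 4)%nat ->
     mvec (NstarKK a w p) (fun j => pd (HKK a w mu) j p) i
       = M11 a mu p * pd (HKK a w mu) i p + M12 p * pd (KKK a w mu) i p /\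
     mvec (NstarKK a w p) (fun j => pd (KKK a w mu) j p) i
       = M21 a w mu p * pd (HKK a w mu) i p + M22 a mu p * pd (KKK a w mu) i p) /\
  (* (iv) eigenvalues u_{1,2} = ucen +- sqrt(urad)/y^2, for either complex root s *)
  (forall (p : pt) (s : C), p 3%nat <> 0 -> (s * s = RtoC (urad a w mu p))%C ->
     forall l : C,
       is_eigenvalue2 (M11 a mu p) (M12 p) (M21 a w mu p) (M22 a mu p) l <->
       (l = RtoC (ucen a p) + s / RtoC (p 3%nat ^ 2) \/
        l = RtoC (ucen a p) - s / RtoC (p 3%nat ^ 2))%C).
Proof.
  split; [|split; [|split]].
  - exact (pb0_HKK_KKK a w mu).
  - intros X Y HX HY p i. apply torsion_NKK; assumption.
  - exact (NstarKK_dHKK_dKKK a w mu).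
  - intros p s Hp Hs l. apply eigenvalues_M; assumption.
Qed.
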